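(* Let $\Gamma=(V,E,\ell)$ be a connected finite labeled simplicial graph with all labels even whose Artin group is of FC-type, $\mathbb{K}$ a field of characteristic $0$, and $\chi:A_\Gamma\to\mathbb{Z}$ a surjective non-resonant homomorphism. Then for every $d\in\mathbb{T}_\Gamma$ and every edge $e\in E$, $\operatorname{mult}_d(\mathbf{p}_e\mathbf{q}_e)\le 2$.
   Context: $\Gamma$ has labels $\ell(e)=2\tilde\ell(e)$, $\tilde\ell(e)\ge1$; $A_\Gamma=\langle g_v\ (v\in V)\mid (g_vg_w)^{\tilde\ell(e)}=(g_wg_v)^{\tilde\ell(e)},\ e=\{v,w\}\in E\rangle$; FC-type means that for every clique $X$ the Coxeter group on $g_v$ ($v\in X$) with $g_v^2=1$, $(g_vg_w)^{\ell(\{v,w\})}=1$ is finite. $m_v=\chi(g_v)$, $m_e=m_v+m_w$ for $e=\{v,w\}$; non-resonant means $m_v\ne0$ for all $v$. For $e=\{v,w\}\in E$: $\mathbf{p}_e=(t^{m_v}-1)(t^{m_w}-1)$ and $\mathbf{q}_e=q_{\tilde\ell(e)}(t^{m_e})$ with $q_n(x)=(x^n-1)/(x-1)$. For $f\in\mathbb{K}[t^{\pm1}]$, $\operatorname{mult}_d(f)$ is the largest $m$ with $\Phi_d(t)^m\mid f$, $\Phi_d$ the $d$-th cyclotomic polynomial. $\mathbb{T}_\Gamma=\{d\in\mathbb{Z}_{>1}: d\mid m_v\text{ for some }v\}\cup\{d\in\mathbb{Z}_{>1}: d\mid\tilde\ell(e)m_e,\ d\nmid m_e\text{ for some }e\in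 E\}$. *)

From HB Require Import structures.
From mathcomp Require Import all_boot all_order all_algebra all_field.
Set Implicit Arguments. Unset Strict Implicit. Unset Printing Implicit Defensive.
Import Order.TTheory GRing.Theory Num.Theory.
Local Open Scope ring_scope.

(* ---------- Graph data ----------
   V : finType (vertices), E : rel V (edges), lt : V -> V -> nat gives
   \tilde\ell; the label of edge {v,w} is \ell = 2 * lt v w. *)

Definition simple_graph (V : finType) (E : rel V) :=
  symmetric E /\ irreflexive E.

Definition connected_graph (V : finType) (E : rel V) :=
  forall v w : V, connect E v w.

Definition even_labels (V : finType) (E : rel V) (lt : V -> V -> nat) :=
  (forall v w, lt v w = lt w v) /\ (forall v w, E v w -> (1 <= lt v w)%N).

Definition clique (V : finType) (E : rel V) (X : {set V}) :=
  forall v w, v \in X -> w \in X -> v != w -> E v w.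

Definition alt_word (V : Type) (v w : V) (n : nat) : seq V :=
  flatten (nseq n [:: v; w]).

Inductive cox_rel (V : finType) (lt : V -> V -> nat) (X : {set V}) :
  seq V -> seq V -> Prop :=
| cox_sq v : v \in X -> cox_rel lt X [:: v; v] [::]
| cox_braid v w : v \in X -> w \in X -> v != w ->
    cox_rel lt X (alt_word v w (2 * lt v w)) [::].

Inductive cox_eq (V : finType) (lt : V -> V -> nat) (X : {set V}) :
  seq V -> seq V -> Prop :=
| cox_refl u : cox_eq lt X u u
| cox_sym u w : cox_eq lt X u w -> cox_eq lt X w u
| cox_trans u w x : cox_eq lt X u w -> cox_eq lt X w x -> cox_eq lt X u x
| cox_ctx s t x y : all (mem X) s -> all (mem X) t -> cox_rel lt X x y ->
    cox_eq lt X (s ++ x ++ t) (s ++ y ++ t).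

(* The Coxeter group W_X (generated by the g_v, v in X) is finite:
   finitely many classes of words over X. *)
Definition coxeter_finite (V : finType) (lt : V -> V -> nat) (X : {set V}) :=
  exists L : seq (seq V),
    forall u : seq V, all (mem X) u -> exists2 u', u' \in L & cox_eq lt X u u'.

Definition FC_type (V : finType) (E : rel V) (lt : V -> V -> nat) :=
  forall X : {set V}, clique E X -> coxeter_finite lt X.

(* ---------- The Artin group A_Gamma and homomorphisms to Z ----------
   Elements are represented by words in the generators and their inverses:
   (v, false) = g_v, (v, true) = g_v^{-1}. *)

Definition aword (V : Type) := seq (V * bool).

Definition ainv (V : Type) (a : V * bool) : V * bool := (a.1, ~~ a.2).

Definition apow (V : Type) (v w : V) (n : nat) : aword V :=
  flatten (nseq n [:: (v, false); (w, false)]).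

Inductive artin_rel (V : finType) (E : rel V) (lt : V -> V -> nat) :
  aword V -> aword V -> Prop :=
| ar_free a : artin_rel E lt [:: a; ainv a] [::]
| ar_braid v w : E v w -> artin_rel E lt (apow v w (lt v w)) (apow w v (lt v w)).

Inductive artin_eq (V : finType) (E : rel V) (lt : V -> V -> nat) :
  aword V -> aword V -> Prop :=
| ae_refl u : artin_eq E lt u u
| ae_sym u w : artin_eq E lt u w -> artin_eq E lt w u
| ae_trans u w x : artin_eq E lt u w -> artin_eq E lt w x -> artin_eq E lt u x
| ae_ctx s t x y : artin_rel E lt x y ->
    artin_eq E lt (s ++ x ++ t) (s ++ y ++ t).

Definition artin_hom (V : finType) (E : rel V) (lt : V -> V -> nat)
  (chi : aword V -> int) :=
  (forall u w, chi (u ++ w) = chi u + chi w) /\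
  (forall u w, artin_eq E lt u w -> chi u = chi w).

Definition hom_surjective (V : Type) (chi : aword V -> int) :=
  forall z : int, exists u, chi u = z.

Definition mv (V : Type) (chi : aword V -> int) (v : V) : int := chi [:: (v, false)].

Definition non_resonant (V : Type) (chi : aword V -> int) :=
  forall v, mv chi v != 0.

Definition me (V : Type) (chi : aword V -> int) (v w : V) : int :=
  mv chi v + mv chi w.

Definition in_TGamma (V : finType) (E : rel V) (lt : V -> V -> nat)
  (chi : aword V -> int) (d : nat) : Prop :=
  (1 < d)%N /\
  ((exists v, (d%:Z %| mv chi v)%Z) \/
   (exists v w, E v w /\ ((d%:Z %| (lt v w)%:Z * me chi v w)%Z) /\
                ~~ (d%:Z %| me chi v w)%Z)).

(* ---------- Laurent polynomials K[t^{+-1}] ----------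
   realized inside the fraction field of K[t]: elements p * t^z. *)
Section Laurent.
Variable K : fieldType.

Definition LK := {fraction {poly K}}.
Definition tofracK (p : {poly K}) : LK := @FracField.tofrac _ p.

Definition tL : LK := tofracK 'X.

Definition is_laurent (f : LK) := exists (p : {poly K}) (z : int), f = tofracK p * tL ^ z.

Definition ldvd (g f : LK) := exists h : LK, is_laurent h /\ f = g * h.

Definition PhiL (d : nat) : LK := tofracK (map_poly intr ('Phi_d)).

(* q_n(x) = (x^n - 1)/(x - 1) = 1 + x + ... + x^(n-1) *)
Definition qn (n : nat) (x : LK) : LK := \sum_(i < n) x ^+ i.

Definition p_e (V : Type) (chi : aword V -> int) (v w : V) : LK :=
  (tL ^ mv chi v - 1) * (tL ^ mv chi w - 1).

Definition q_e (V : Type) (lt : V -> V -> nat) (chi : aword V -> int) (v w : V) : LK :=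
  qn (lt v w) (tL ^ me chi v w).

Definition mult_le (d : nat) (f : LK) (k : nat) :=
  forall m : nat, ldvd (PhiL d ^+ m) f -> (m <= k)%N.
End Laurent.

From HB Require Import structures.
From mathcomp Require Import all_boot all_order all_algebra all_field zify.
Set Implicit Arguments. Unset Strict Implicit. Unset Printing Implicit Defensive.
Import Order.TTheory GRing.Theory Num.Theory.
Local Open Scope ring_scope.

(* Write a = m_v, b = m_w, n = ~l(e). Up to a unit c t^z of K[t^{+-1}], p_e q_e is
   the integer polynomial (X^|a| - 1)(X^|b| - 1)(1 + X^|a+b| + ... + X^((n-1)|a+b|)).
   As Phi_d is monic over Z and K has characteristic 0, a power Phi_d^m dividing it
   over K already divides it over Z, hence over the algebraic numbers, so m is at most
   the multiplicity of a primitive d-th root of unity z.  Each X^k - 1 is separable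
   and vanishes at z iff d | k; the geometric factor has at most a simple root at z,
   and none when d | a + b.  Since d | a and d | b force d | a + b, at most two of the
   three factors vanish at z. *)

Definition geom_poly (R : nzRingType) (k n : nat) : {poly R} := \sum_(i < n) 'X^k ^+ i.

Definition pq_poly (R : nzRingType) (a b : int) (n : nat) : {poly R} :=
  ('X^`|a| - 1) * ('X^`|b| - 1) * geom_poly R `|a + b| n.

Lemma geom_polyE {R : comNzRingType} k n :
  ('X^k - 1) * geom_poly R k n = 'X^(k * n) - 1.
Proof. by rewrite -subrX1 exprM. Qed.

Lemma horner_geom_poly {R : comNzRingType} k n (x : R) :
  x ^+ k = 1 -> (geom_poly R k n).[x] = n%:R.
Proof.
move=> xk1; rewrite horner_sum -[n in RHS]card_ord -sumr_const.
by apply: eq_bigr => i _; rewrite horner_exp hornerXn xk1 expr1n.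
Qed.

Lemma map_geom_poly (R S : nzRingType) (f : {rmorphism R -> S}) k n :
  map_poly f (geom_poly R k n) = geom_poly S k n.
Proof.
by rewrite rmorph_sum; apply: eq_bigr => i _; rewrite rmorphXn /= map_polyXn.
Qed.

Lemma map_pq_poly (R S : nzRingType) (f : {rmorphism R -> S}) a b n :
  map_poly f (pq_poly R a b n) = pq_poly S a b n.
Proof. by rewrite !rmorphM !rmorphB rmorph1 /= !map_polyXn map_geom_poly. Qed.

Lemma Xn_sub1_neq0 (R : nzRingType) e : (0 < e)%N -> ('X^e - 1 : {poly R}) != 0.
Proof. by move=> e_gt0; rewrite -size_poly_eq0 size_XnsubC. Qed.

Lemma geom_poly_neq0 (R : numDomainType) k n : (0 < n)%N -> geom_poly R k n != 0.
Proof.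
move=> n_gt0; apply: contraTneq n_gt0 => G0.
by rewrite -leqNgt leqn0 -(pnatr_eq0 R) -(horner_geom_poly n (expr1n _ k)) G0 horner0.
Qed.

Lemma pq_poly_neq0 (R : numDomainType) (a b : int) n :
  a != 0 -> b != 0 -> (0 < n)%N -> pq_poly R a b n != 0.
Proof.
by move=> a_neq0 b_neq0 n_gt0; rewrite !mulf_neq0 ?Xn_sub1_neq0 ?geom_poly_neq0 ?absz_gt0.
Qed.

Lemma geom_sum_inv (F : fieldType) (x : F) n : x != 0 ->
  \sum_(i < n) x^-1 ^+ i = x^-1 ^+ n.-1 * \sum_(i < n) x ^+ i.
Proof.
move=> x_neq0; rewrite mulr_sumr (reindex_inj rev_ord_inj) /=.
apply: eq_bigr => i _; have -> : n.-1 = (n - i.+1 + i)%N by have := ltn_ord i; lia.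
by rewrite exprD -mulrA -exprMn mulVf // expr1n mulr1.
Qed.

Lemma intr_inj_pchar0 (R : idomainType) :
  [pchar R] =i pred0 -> injective (intr : int -> R).
Proof.
move/pcharf0P=> natr_eq0.
have intr_eq0 z : (z%:~R == 0 :> R) = (z == 0).
  by case: z => n; rewrite ?NegzE ?mulrNz ?oppr_eq0 natr_eq0.
by move=> x y /eqP; rewrite -subr_eq0 -rmorphB intr_eq0 subr_eq0 => /eqP.
Qed.

Section IntPolyDvd.
Variables (R : idomainType) (P F : {poly int}).
Hypothesis P_monic : P \is monic.
Local Notation iota := (map_poly (intr : int -> R)).

Lemma map_intr_dvdp : P %| F -> iota P %| iota F.
Proof.
by case/(Pdiv.IdomainMonic.dvdpP P_monic)=> Q ->; rewrite rmorphM dvdp_mull.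
Qed.

Lemma map_intr_dvdp_pchar0 : [pchar R] =i pred0 -> iota P %| iota F -> P %| F.
Proof.
move/intr_inj_pchar0=> inj_intr iotaP_F.
have size_iota := size_map_inj_poly inj_intr (rmorph0 _).
have P_neq0 : P != 0 := monic_neq0 P_monic.
have iotaP_mod : iota P %| iota (F %% P).
  move: iotaP_F; rewrite {1}(Pdiv.IdomainMonic.divp_eq P_monic F).
  by rewrite rmorphD rmorphM /= dvdp_addr // dvdp_mull.
apply/eqP/(map_inj_poly inj_intr (rmorph0 _)); rewrite rmorph0.
apply/eqP; apply: contraTT (ltn_modpN0 F P_neq0) => mod_neq0.
by rewrite -leqNgt -!size_iota dvdp_leq.
Qed.
End IntPolyDvd.

Section PrimitiveRootMultiplicity.
Variables (d : nat) (z : algC).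
Hypothesis prim_z : d.-primitive_root z.

Lemma mup_Xn j : mup z 'X^j = 0%N.
Proof.
by rewrite mupNroot // /root hornerXn expf_eq0 (prim_root_eq0 prim_z) eqn0Ngt
  (prim_order_gt0 prim_z) andbF.
Qed.

Lemma mup_Xn_sub1 e : (0 < e)%N -> mup z ('X^e - 1) = (d %| e)%N.
Proof.
move=> e_gt0; have Xe1_neq0 : 'X^e - 1 != 0 :> {poly algC} by rewrite Xn_sub1_neq0.
have root_Xe1 : root ('X^e - 1) z = (d %| e)%N.
  by rewrite /root !hornerE subr_eq0 (prim_order_dvd prim_z).
have [de | nde] := boolP (d %| e)%N; last by rewrite mupNroot ?root_Xe1.
apply/eqP; rewrite eqn_leq mup_leq // separable_nosquare ?size_XsubC //=.
  by rewrite mup_geq // expr1 -root_factor_theorem root_Xe1.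
by rewrite separable_Xn_sub_1 // pnatr_eq0 -lt0n.
Qed.

Lemma mup_geom_poly k n : (0 < n)%N -> (mup z (geom_poly algC k n) <= ~~ (d %| k))%N.
Proof.
move=> n_gt0; have [dk | ndk] := boolP (d %| k)%N.
  rewrite mupNroot // /root horner_geom_poly ?pnatr_eq0 -?lt0n //.
  by apply/eqP; rewrite -(prim_order_dvd prim_z).
have k_gt0 : (0 < k)%N by case: k ndk => //; rewrite dvdn0.
have := congr1 (mup z) (geom_polyE k n).
rewrite mupM ?Xn_sub1_neq0 ?geom_poly_neq0 //.
by rewrite !mup_Xn_sub1 ?muln_gt0 ?k_gt0 // (negPf ndk) add0n => ->; apply: leq_b1.
Qed.

Lemma Cyclotomic_exp_dvdp_mup m f : f != 0 ->
  map_poly intr ('Phi_d ^+ m) %| f -> (m <= mup z f)%N.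
Proof.
move=> f_neq0; rewrite rmorphXn /= (Cintr_Cyclotomic prim_z) mup_geq //.
apply: dvdp_trans; apply: dvdp_exp2r.
by rewrite -root_factor_theorem root_cyclotomic.
Qed.

Lemma mup_pq_poly_le2 (a b : int) n j : a != 0 -> b != 0 -> (0 < n)%N ->
  (mup z (pq_poly algC a b n * 'X^j) <= 2)%N.
Proof.
move=> a_neq0 b_neq0 n_gt0.
rewrite mupM ?pq_poly_neq0 ?monic_neq0 ?monicXn // mup_Xn addn0.
rewrite !mupM ?mulf_neq0 ?Xn_sub1_neq0 ?geom_poly_neq0 ?absz_gt0 //.
rewrite !mup_Xn_sub1 ?absz_gt0 //.
have dvd_sum : (d %| absz a)%N -> (d %| absz b)%N -> (d %| absz (a + b)%R)%N.
  by rewrite -!(dvdzE d); apply: rpredD.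
have := mup_geom_poly (absz (a + b)%R) n_gt0.
by case: (d %| absz a)%N (d %| absz b)%N dvd_sum => [] [] => [-> // | _ | _ | _] /=; lia.
Qed.
End PrimitiveRootMultiplicity.

Lemma Cyclotomic_exp_dvdp_pq_poly_le2 d m (a b : int) n j : (0 < d)%N ->
  a != 0 -> b != 0 -> (0 < n)%N ->
  'Phi_d ^+ m %| pq_poly int a b n * 'X^j -> (m <= 2)%N.
Proof.
move=> d_gt0 a_neq0 b_neq0 n_gt0 Phi_dvd.
have [z prim_z] := C_prim_root_exists d_gt0.
apply: leq_trans (mup_pq_poly_le2 prim_z j a_neq0 b_neq0 n_gt0).
apply: (Cyclotomic_exp_dvdp_mup prim_z).
  by rewrite mulf_neq0 ?pq_poly_neq0 ?monic_neq0 ?monicXn.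
move: Phi_dvd => /(map_intr_dvdp algC (monic_exp m (Cyclotomic_monic d))).
by rewrite rmorphM /= map_pq_poly map_polyXn.
Qed.

Section LaurentReduction.
Variable K : fieldType.
Local Notation T := (tL K).
Local Notation tf := (@tofracK K).

HB.instance Definition _ := GRing.RMorphism.copy tf (@tofrac {poly K}).

Definition laurent_monomial (u : LK K) :=
  exists (c : K) (z : int), c != 0 /\ u = tf c%:P * T ^ z.

Lemma tL_neq0 : T != 0.
Proof. by rewrite tofrac_eq0 polyX_eq0. Qed.

Lemma tL_expz_neq0 (z : int) : T ^ z != 0.
Proof. exact: expfz_neq0 tL_neq0. Qed.

Lemma tofracK_Xn k : tf 'X^k = T ^+ k.
Proof. exact: rmorphXn. Qed.

Lemma tL_expz (z : int) : exists p q : nat, T ^ z = T ^+ p / T ^+ q.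
Proof.
case: z => k; first by exists k, 0%N; rewrite expr0 divr1.
by exists 0%N, k.+1; rewrite NegzE -exprnN expr0 div1r.
Qed.

Lemma is_laurentM (f g : LK K) : is_laurent f -> is_laurent g -> is_laurent (f * g).
Proof.
move=> [p [y ->]] [q [z ->]]; exists (p * q), (y + z).
by rewrite rmorphM expfzDr ?tL_neq0 // mulrACA.
Qed.

Lemma laurent_monomial_is_laurent (u : LK K) : laurent_monomial u -> is_laurent u.
Proof. by move=> [c [z [_ ->]]]; exists c%:P, z. Qed.

Lemma laurent_monomial_expz z : laurent_monomial (T ^ z).
Proof. by exists 1, z; rewrite oner_neq0 polyC1 rmorph1 mul1r. Qed.

Lemma laurent_monomial1 : laurent_monomial 1.
Proof. by rewrite -(expr0z T); apply: laurent_monomial_expz. Qed.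

Lemma laurent_monomialN1 : laurent_monomial (-1).
Proof.
exists (-1), 0; rewrite oppr_eq0 oner_neq0 expr0z mulr1.
by rewrite polyCN polyC1 rmorphN rmorph1.
Qed.

Lemma laurent_monomialM (u v : LK K) :
  laurent_monomial u -> laurent_monomial v -> laurent_monomial (u * v).
Proof.
move=> [c [y [c_neq0 ->]]] [e [z [e_neq0 ->]]]; exists (c * e), (y + z).
by rewrite mulf_neq0 // polyCM rmorphM expfzDr ?tL_neq0 // mulrACA.
Qed.

Lemma laurent_monomialX (u : LK K) n : laurent_monomial u -> laurent_monomial (u ^+ n).
Proof.
move=> mono_u; elim: n => [|n IHn]; first by rewrite expr0; apply: laurent_monomial1.
by rewrite exprS; apply: laurent_monomialM.
Qed.

Lemma laurent_monomial_neq0 (u : LK K) : laurent_monomial u -> u != 0.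
Proof.
move=> [c [z [c_neq0 ->]]]; apply: mulf_neq0 (tL_expz_neq0 z).
by rewrite tofrac_eq0 polyC_eq0.
Qed.

Lemma laurent_monomialV (u : LK K) : laurent_monomial u -> laurent_monomial u^-1.
Proof.
move=> [c [z [c_neq0 ->]]]; exists c^-1, (- z); split; first by rewrite invr_eq0.
by rewrite invfM invr_expz -polyCV rmorphV // poly_unitE size_polyC c_neq0 coefC unitfE.
Qed.

Lemma ldvd_mulr_monomial (g f u : LK K) :
  laurent_monomial u -> ldvd g (f * u) -> ldvd g f.
Proof.
move=> mono_u [h [laurent_h fu_eq]]; exists (h * u^-1); split.
  exact/is_laurentM/laurent_monomial_is_laurent/laurent_monomialV.
by rewrite mulrA -fu_eq mulfK ?laurent_monomial_neq0.
Qed.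

Lemma ldvd_tofrac (P F : {poly K}) : ldvd (tf P) (tf F) -> exists j, P %| F * 'X^j.
Proof.
move=> [_ [[Q [z ->]] F_eq]]; have [p [q Tz]] := tL_expz z; exists q.
suff -> : F * 'X^q = P * (Q * 'X^p) by apply: dvdp_mulIl.
have tf_inj : injective tf by move=> x y /eqP; rewrite tofrac_eq => /eqP.
apply: tf_inj; rewrite !rmorphM /= F_eq Tz !tofracK_Xn.
by rewrite !mulrA divfK ?expf_neq0 ?tL_neq0.
Qed.

Lemma tofracK_geom_poly k n : tf (geom_poly K k n) = qn n (T ^+ k).
Proof. by rewrite rmorph_sum; apply: eq_bigr => i _; rewrite rmorphXn /= tofracK_Xn. Qed.

Lemma tL_expz_sub1 (a : int) :
  exists2 u, laurent_monomial u & T ^ a - 1 = tf ('X^`|a| - 1) * u.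
Proof.
case: a => k.
  exists 1; first exact: laurent_monomial1.
  by rewrite rmorphB rmorph1 /= tofracK_Xn mulr1.
exists (- T ^ Negz k).
  by rewrite -mulN1r; apply/laurent_monomialM/laurent_monomial_expz/laurent_monomialN1.
have Tk_neq0 : T ^+ k.+1 != 0 by rewrite expf_neq0 ?tL_neq0.
rewrite NegzE abszN -exprnN rmorphB rmorph1 /= tofracK_Xn.
by rewrite mulrN mulrBl divff // mul1r opprB.
Qed.

Lemma qn_tL_expz (c : int) n :
  exists2 u, laurent_monomial u & qn n (T ^ c) = tf (geom_poly K `|c| n) * u.
Proof.
case: c => k.
  exists 1; first exact: laurent_monomial1.
  by rewrite tofracK_geom_poly mulr1.
exists ((T ^ Negz k) ^+ n.-1); first exact/laurent_monomialX/laurent_monomial_expz.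
rewrite NegzE abszN -exprnN tofracK_geom_poly mulrC.
by rewrite /qn geom_sum_inv ?expf_neq0 ?tL_neq0.
Qed.

Lemma p_e_q_e_factor (V : Type) (lt : V -> V -> nat) (chi : aword V -> int) v w :
  exists2 u, laurent_monomial u &
    p_e K chi v w * q_e K lt chi v w =
    tf (pq_poly K (mv chi v) (mv chi w) (lt v w)) * u.
Proof.
rewrite /p_e /q_e.
have [u1 mono_u1 ->] := tL_expz_sub1 (mv chi v).
have [u2 mono_u2 ->] := tL_expz_sub1 (mv chi w).
have [u3 mono_u3 ->] := qn_tL_expz (me chi v w) (lt v w).
exists (u1 * u2 * u3).
  exact: laurent_monomialM (laurent_monomialM mono_u1 mono_u2) mono_u3.
by rewrite !rmorphM /= /me (mulrACA _ u1) [LHS]mulrACA.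
Qed.

Lemma PhiL_exp d m : PhiL K d ^+ m = tf (map_poly intr ('Phi_d ^+ m)).
Proof. by rewrite !rmorphXn. Qed.
End LaurentReduction.

Theorem lemma5p3 (V : finType) (E : rel V) (lt : V -> V -> nat)
  (K : fieldType) (chi : aword V -> int) :
  simple_graph E -> connected_graph E -> even_labels E lt -> FC_type E lt ->
  [pchar K] =i pred0 ->
  artin_hom E lt chi -> hom_surjective chi -> non_resonant chi ->
  forall d : nat, in_TGamma E lt chi d ->
  forall v w : V, E v w ->
  mult_le d (p_e K chi v w * q_e K lt chi v w) 2.
Proof.
move=> _ _ [_ lt_gt0] _ pchar0 _ _ nonres d [d_gt1 _] v w Evw m.
have [u mono_u ->] := p_e_q_e_factor K lt chi v w.
move=> /(ldvd_mulr_monomial mono_u).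
rewrite PhiL_exp -(map_pq_poly (intr : int -> K)) => /ldvd_tofrac [j].
rewrite -(map_polyXn (intr : int -> K)) -rmorphM.
move=> /(map_intr_dvdp_pchar0 (monic_exp m (Cyclotomic_monic d)) pchar0).
exact: Cyclotomic_exp_dvdp_pq_poly_le2 (ltnW d_gt1) (nonres v) (nonres w)
  (lt_gt0 v w Evw).
Qed.
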